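(* Let $m,n\geq 2$. Each of the following six functions is not Banach-Mazur computable: (I) $g_{\text{inv}}:\mathbb{C}^{m\times n}\to\mathbb{C}^{n\times m}$, $g_{\text{inv}}(A)=A^\dagger$; (II) $g_{\text{norm}}:\mathbb{C}^{m\times n}\to\mathbb{R}$, $g_{\text{norm}}(A)=\|A^\dagger\|_F$; (III) $\Psi_{\text{lsq}}:\mathbb{C}^{m\times n}\times\mathbb{C}^m\to\mathbb{R}$, $\Psi_{\text{lsq}}(A,b)=\min_{x\in\mathbb{C}^n}\|Ax-b\|_2$; (IV) $\Psi_{\text{sol}}:\mathbb{C}^{m\times n}\times\mathbb{C}^m\to\mathbb{C}^n$, $\Psi_{\text{sol}}(A,b)=\hat{x}_{(A,b)}$; (V) $\Psi_{\text{norm}}:\mathbb{C}^{m\times n}\times\mathbb{C}^m\to\mathbb{R}$, $\Psi_{\text{norm}}(A,b)=\|\hat{x}_{(A,b)}\|_2=\|A^\dagger b\|_2$; (VI) $\kappa:\mathbb{C}^{m\times n}\to\mathbb{R}$, $\kappa(A)=\|A\|_F\,\|A^\dagger\|_F$.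
   Context: For $A\in\mathbb{C}^{m\times n}$, $A^\dagger\in\mathbb{C}^{n\times m}$ denotes the Moore–Penrose pseudoinverse, the unique matrix with $AA^\dagger A=A$, $A^\dagger AA^\dagger=A^\dagger$, $(AA^\dagger)^H=AA^\dagger$, $(A^\dagger A)^H=A^\dagger A$. For $b\in\mathbb{C}^m$, $\hat{x}_{(A,b)}=A^\dagger b$ is the minimizer of $\|Ax-b\|_2$ over $x\in\mathbb{C}^n$ with minimal Euclidean norm. $\|\cdot\|_F$ is the Frobenius norm, $\|\cdot\|_2$ the Euclidean norm. Computability notions: a sequence $(r_k)_{k\in\mathbb{N}}\subset\mathbb{Q}$ is computable if $r_k=(-1)^{s(k)}a(k)/b(k)$ for recursive functions $a,b,s:\mathbb{N}\to\mathbb{N}$ with $b(k)\neq 0$ (analogously for multi-indexed sequences). A real number $x$ is computable if there is a computable sequence of rationals $(r_k)$ with $|r_k-x|\le 2^{-k}$ for all $k$; $\mathbb{R}_c$ denotes the computable reals. A sequence $(x_n)_{n}\subset\mathbb{R}$ is computable if there is a computable double sequence $(r_{n,k})\subset\mathbb{Q}$ with $|r_{n,k}-x_n|\le 2^{-k}$ for all $n,k$. Complex numbers, vectors, matrices (and sequences of these) are computable if all real and imaginary parts of all entries are computable (as sequences). A function $f$ defined on computable inputs (real/complex vectors, matrices, or matrix–vector pairs with computable entries) is Banach-Mazur computable if it maps every computable sequence of inputs in its domain to a computable sequence of outputs; for complex-valued functions this is required of the real and imaginary parts. *)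

From HB Require Import structures.
From mathcomp Require Import all_boot all_order all_algebra.
From mathcomp Require Import complex spectral.
From mathcomp Require Import boolp classical_sets reals.
Set Implicit Arguments. Unset Strict Implicit. Unset Printing Implicit Defensive.
Import Order.TTheory GRing.Theory Num.Theory.
Local Open Scope ring_scope.

Inductive rcode : Type :=
| rZero : rcode
| rSucc : rcode
| rProj : nat -> rcode
| rComp : rcode -> list rcode -> rcode
| rPrec : rcode -> rcode -> rcode        (* primitive recursion on 1st arg *)
| rMin  : rcode -> rcode.

Inductive reval : rcode -> list nat -> nat -> Prop :=
| reZero xs : reval rZero xs 0
| reSucc x xs : reval rSucc (x :: xs) x.+1
| reProj i xs y : onth xs i = Some y -> reval (rProj i) xs y
| reComp f gs xs ys y :
    revals gs xs ys -> reval f ys y -> reval (rComp f gs) xs y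
| rePrec0 f g xs y : reval f xs y -> reval (rPrec f g) (0%N :: xs) y
| rePrecS f g k xs r y :
    reval (rPrec f g) (k :: xs) r -> reval g (k :: r :: xs) y ->
    reval (rPrec f g) (k.+1 :: xs) y
| reMin f xs y :
    reval f (y :: xs) 0 ->
    (forall z, (z < y)%N -> exists v, reval f (z :: xs) v.+1) ->
    reval (rMin f) xs y
with revals : list rcode -> list nat -> list nat -> Prop :=
| resNil xs : revals nil xs nil
| resCons g gs xs y ys :
    reval g xs y -> revals gs xs ys -> revals (g :: gs) xs (y :: ys).

Definition recursive2 (f : nat -> nat -> nat) : Prop :=
  exists c : rcode, forall n k : nat, reval c [:: n; k] (f n k).

Section Computability.
Variable R : realType.

Definition rat_of (s a b : nat) : R := (-1) ^+ s * (a%:R / b%:R).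

Definition computable_seqR (x : nat -> R) : Prop :=
  exists a b s : nat -> nat -> nat,
    [/\ recursive2 a, recursive2 b, recursive2 s,
        (forall n k, b n k <> 0%N) &
        (forall n k, `|rat_of (s n k) (a n k) (b n k) - x n| <= (2%:R ^+ k)^-1)].

Definition computable_seqC (z : nat -> R[i]) : Prop :=
  computable_seqR (fun n => complex.Re (z n)) /\
  computable_seqR (fun n => complex.Im (z n)).

(* sequences of complex p x q matrices (vectors are p x 1 matrices) *)
Definition computable_seqM (p q : nat) (A : nat -> 'M[R[i]]_(p, q)) : Prop :=
  forall (i : 'I_p) (j : 'I_q), computable_seqC (fun n => A n i j).

Definition computable_seqMV (p q : nat)
    (u : nat -> 'M[R[i]]_(p, q) * 'cV[R[i]]_p) : Prop :=
  computable_seqM (fun n => (u n).1) /\ computable_seqM (fun n => (u n).2).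

Definition BM_computable (A B : Type) (cin : (nat -> A) -> Prop)
    (cout : (nat -> B) -> Prop) (f : A -> B) : Prop :=
  forall u : nat -> A, cin u -> cout (fun n => f (u n)).

Definition cabs2 (z : R[i]) : R := complex.Re z ^+ 2 + complex.Im z ^+ 2.

(* Frobenius norm; for p x 1 matrices this is the Euclidean norm *)
Definition frob (p q : nat) (A : 'M[R[i]]_(p, q)) : R :=
  Num.sqrt (\sum_(i < p) \sum_(j < q) cabs2 (A i j)).

Definition norm2 (p : nat) (v : 'cV[R[i]]_p) : R := frob v.

Local Open Scope sesquilinear_scope.

Definition is_pinv (p q : nat) (A : 'M[R[i]]_(p, q)) (X : 'M[R[i]]_(q, p)) :=
  [/\ A *m X *m A = A, X *m A *m X = X,
      (A *m X) ^t* = A *m X & (X *m A) ^t* = X *m A].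

(* the Moore-Penrose pseudoinverse: the unique X with is_pinv A X *)
Definition pinv (p q : nat) (A : 'M[R[i]]_(p, q)) : 'M[R[i]]_(q, p) :=
  xget 0 [set X | is_pinv A X].

(* min_x || A x - b ||_2 (the infimum is attained) *)
Definition lsq_res (p q : nat) (A : 'M[R[i]]_(p, q)) (b : 'cV[R[i]]_p) : R :=
  inf [set norm2 (A *m x - b) | x in [set: 'cV[R[i]]_q]].

(* the minimal-norm least squares solution A^dagger b *)
Definition lsq_sol (p q : nat) (A : 'M[R[i]]_(p, q)) (b : 'cV[R[i]]_p)
  : 'cV[R[i]]_q := pinv A *m b.

End Computability.

(* Let x_n be 2^-(T+1) if the n-th program, run on input n, halts after T
   steps, and 0 if it never halts.  The sequence (x_n) is computable: to
   precision 2^-k it suffices to run the program for k steps.  Feeding the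
   matrices A_n = diag(x_n, b), b in {0, 1}, and the right-hand side e_1 to the
   six functions produces 1/x_n (with 1/0 = 0: entries or norms of the
   pseudoinverse and of the least squares solution), the indicator of x_n = 0
   (the least squares residual), or sqrt(x_n^2 + 1) sqrt(x_n^-2 + 1) (the
   condition number).  On halting and non-halting indices these values lie on
   opposite sides of a rational threshold, at distance at least 1/2, so an
   approximation to within 1/4 would decide the halting problem.  Halting is
   shown undecidable for an explicit universal machine for mu-recursive codes,
   whose step function is written in a small expression language that compiles
   to primitive recursive codes. *)

From HB Require Import structures.
From mathcomp Require Import all_boot all_order all_algebra.
From mathcomp Require Import complex spectral.
From mathcomp Require Import boolp classical_sets reals.
From mathcomp Require Import zify lra.
Set Implicit Arguments. Unset Strict Implicit. Unset Printing Implicit Defensive.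
Import Order.TTheory GRing.Theory Num.Theory.

(** * Primitive recursive codes *)

Lemma eq_iteri n (f g : nat -> nat -> nat) x :
  (forall i r, f i r = g i r) -> iteri n f x = iteri n g x.
Proof. by move=> efg; elim: n => //= n ->. Qed.

Lemma iteri_iter n (f : nat -> nat) x : iteri n (fun _ => f) x = iter n f x.
Proof. by elim: n => //= n ->. Qed.

Fixpoint tri k := if k is k'.+1 then tri k' + k'.+1 else 0.

Fixpoint cdiag z :=
  if z is z'.+1 then
    if tri (cdiag z').+1 <= z'.+1 then (cdiag z').+1 else cdiag z'
  else 0.

Definition cpair x y := tri (x + y) + y.
Definition csnd z := z - tri (cdiag z).
Definition cfst z := cdiag z - csnd z.
Arguments tri : simpl never.
Arguments cdiag : simpl never.
Arguments cpair : simpl never.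
Arguments cfst : simpl never.
Arguments csnd : simpl never.

Lemma triS k : tri k.+1 = tri k + k.+1. Proof. by []. Qed.

Lemma leq_tri a b : a < b -> tri a.+1 <= tri b.
Proof.
elim: b => // b IH; rewrite ltnS leq_eqVlt => /orP[/eqP-> // | /IH].
rewrite [tri b.+1]triS; lia.
Qed.

Lemma cdiag_spec z : tri (cdiag z) <= z < tri (cdiag z).+1.
Proof.
elim: z => [|z IH] //; rewrite [cdiag z.+1]/cdiag -/cdiag.
case: ifP; move: IH; rewrite !triS; lia.
Qed.

Lemma cdiag_uniq d z : tri d <= z < tri d.+1 -> cdiag z = d.
Proof.
have := cdiag_spec z.
case: (ltngtP (cdiag z) d) => // /leq_tri; lia.
Qed.

Lemma cdiag_pair x y : cdiag (cpair x y) = x + y.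
Proof. by apply: cdiag_uniq; rewrite /cpair triS; lia. Qed.

Lemma csnd_pair x y : csnd (cpair x y) = y.
Proof. rewrite /csnd cdiag_pair /cpair; lia. Qed.

Lemma cfst_pair x y : cfst (cpair x y) = x.
Proof. rewrite /cfst csnd_pair cdiag_pair; lia. Qed.

Fixpoint prim_eval (c : rcode) (xs : seq nat) : nat :=
  match c with
  | rZero => 0
  | rSucc => (head 0 xs).+1
  | rProj i => nth 0 xs i
  | rComp f gs => prim_eval f (map (fun g => prim_eval g xs) gs)
  | rPrec f g => if xs is k :: ys then
      iteri k (fun i r => prim_eval g [:: i, r & ys]) (prim_eval f ys) else 0
  | rMin _ => 0
  end.

Fixpoint prim_wf (c : rcode) (n : nat) : bool :=
  match c with
  | rZero => true
  | rSucc => 0 < n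
  | rProj i => i < n
  | rComp f gs => prim_wf f (size gs) && all (fun g => prim_wf g n) gs
  | rPrec f g => [&& 0 < n, prim_wf f n.-1 & prim_wf g n.+1]
  | rMin _ => false
  end.

Fixpoint reval_prim_eval (c : rcode) :
  forall xs, prim_wf c (size xs) -> reval c xs (prim_eval c xs).
Proof.
case: c => [||i|f gs|f g|f] xs /=.
- by constructor.
- by case: xs => // x xs _; constructor.
- move=> lt_i; constructor; rewrite -(odflt_onth 0).
  by case: onth (onthTE xs i) => //; rewrite lt_i.
- case/andP=> wf_f wf_gs; apply: reComp; last first.
    by apply: reval_prim_eval; rewrite size_map.
  elim: gs wf_gs {wf_f} => [|g gs IH] /=; first by constructor.
  by case/andP=> wf_g wf_gs; constructor; [apply: reval_prim_eval | apply: IH].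
- case: xs => [|k ys] //= /andP[wf_f wf_g].
  elim: k => [|k IH]; first by constructor; apply: reval_prim_eval.
  by rewrite iteriS; apply: rePrecS IH _; apply: reval_prim_eval.
- by [].
Qed.

(** * An expression language compiled to primitive recursive codes *)

(* De Bruijn indices; [ELet a b] binds [a] at index 0 in [b], and the step
   [e1] of [ERec e0 e1 k] sees the counter at index 0, the accumulator at 1. *)
Inductive exp : Type :=
| EVar of nat | EZero | ESucc of exp | EPred of exp
| EAdd of exp & exp | ESub of exp & exp | EMul of exp & exp
| EIfz of exp & exp & exp
| ERec of exp & exp & exp
| ELet of exp & exp
| EPair of exp & exp | EFst of exp | ESnd of exp.

Fixpoint eval (e : exp) (env : seq nat) : nat :=
  match e with
  | EVar i => nth 0 env i
  | EZero => 0
  | ESucc a => (eval a env).+1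
  | EPred a => (eval a env).-1
  | EAdd a b => eval a env + eval b env
  | ESub a b => eval a env - eval b env
  | EMul a b => eval a env * eval b env
  | EIfz c a b => if eval c env is 0 then eval a env else eval b env
  | ERec e0 e1 k =>
      iteri (eval k env) (fun i r => eval e1 [:: i, r & env]) (eval e0 env)
  | ELet a b => eval b (eval a env :: env)
  | EPair a b => cpair (eval a env) (eval b env)
  | EFst a => cfst (eval a env)
  | ESnd a => csnd (eval a env)
  end.

Fixpoint scoped (e : exp) (N : nat) : bool :=
  match e with
  | EVar i => i < N
  | EZero => true
  | ESucc a | EPred a | EFst a | ESnd a => scoped a N
  | EAdd a b | ESub a b | EMul a b | EPair a b => scoped a N && scoped b N
  | EIfz c a b => [&& scoped c N, scoped a N & scoped b N]
  | ERec e0 e1 k => [&& scoped e0 N, scoped e1 N.+2 & scoped k N]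
  | ELet a b => scoped a N && scoped b N.+1
  end.

Fixpoint compilable (e : exp) (N : nat) : bool :=
  match e with
  | EVar i => i < N
  | EZero => true
  | ESucc a | EPred a => compilable a N
  | EAdd a b | ESub a b | EMul a b => compilable a N && compilable b N
  | EIfz c a b => [&& compilable c N, compilable a N & compilable b N]
  | ERec e0 e1 k => [&& compilable e0 N, compilable e1 N.+2 & compilable k N]
  | ELet a b => compilable a N && compilable b N.+1
  | EPair _ _ | EFst _ | ESnd _ => false
  end.

Definition enum n := iter n ESucc EZero.

Lemma eval_enum n env : eval (enum n) env = n.
Proof. by elim: n => //= n ->. Qed.

Lemma scoped_enum n N : scoped (enum n) N.
Proof. by elim: n. Qed.

Lemma eval_cat e env1 env2 :
  scoped e (size env1) -> eval e (env1 ++ env2) = eval e env1.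
Proof.
elim: e env1 =>
  [i||a IH|a IH|a IHa b IHb|a IHa b IHb|a IHa b IHb|c IHc a IHa b IHb
  |a IHa b IHb k IHk|a IHa b IHb|a IHa b IHb|a IH|a IH] env1 //=.
- by move=> hi; rewrite nth_cat hi.
- by move=> /IH ->.
- by move=> /IH ->.
- by case/andP=> /IHa -> /IHb ->.
- by case/andP=> /IHa -> /IHb ->.
- by case/andP=> /IHa -> /IHb ->.
- by case/and3P=> /IHc -> /IHa -> /IHb ->.
- case/and3P=> /IHa -> hb /IHk ->.
  by elim: (eval k env1) => //= j ->; rewrite -!cat_cons IHb.
- by case/andP=> /IHa -> hb; rewrite -cat_cons IHb.
- by case/andP=> /IHa -> /IHb ->.
- by move=> /IH ->.
- by move=> /IH ->.
Qed.

Definition tri_exp := ERec EZero (EAdd (EVar 1) (ESucc (EVar 0))) (EVar 0).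
Definition cdiag_exp := ERec EZero
  (EIfz (ESub (ELet (ESucc (EVar 1)) tri_exp) (ESucc (EVar 0)))
     (ESucc (EVar 1)) (EVar 1)) (EVar 0).
Definition csnd_exp := ESub (EVar 0) (ELet cdiag_exp tri_exp).
Definition cfst_exp := ESub cdiag_exp csnd_exp.

Lemma compilable_pairing_exps N : [&& compilable tri_exp N.+1,
  compilable cdiag_exp N.+1, compilable csnd_exp N.+1 & compilable cfst_exp N.+1].
Proof. by []. Qed.

Lemma eval_tri v env : eval tri_exp (v :: env) = tri v.
Proof. by elim: v => //= v ->; rewrite triS. Qed.
Opaque tri_exp.

Lemma eval_cdiag v env : eval cdiag_exp (v :: env) = cdiag v.
Proof.
elim: v => //= v IH; rewrite eval_tri IH [cdiag v.+1]/cdiag -/cdiag /leq.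
by case: (_ - _).
Qed.
Opaque cdiag_exp.

Lemma eval_csnd v env : eval csnd_exp (v :: env) = csnd v.
Proof. by rewrite /= eval_cdiag eval_tri. Qed.
Opaque csnd_exp.

Lemma eval_cfst v env : eval cfst_exp (v :: env) = cfst v.
Proof. by rewrite /= eval_cdiag eval_csnd. Qed.
Opaque cfst_exp.

Fixpoint unpair (e : exp) : exp :=
  match e with
  | EVar i => EVar i
  | EZero => EZero
  | ESucc a => ESucc (unpair a)
  | EPred a => EPred (unpair a)
  | EAdd a b => EAdd (unpair a) (unpair b)
  | ESub a b => ESub (unpair a) (unpair b)
  | EMul a b => EMul (unpair a) (unpair b)
  | EIfz c a b => EIfz (unpair c) (unpair a) (unpair b)
  | ERec e0 e1 k => ERec (unpair e0) (unpair e1) (unpair k)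
  | ELet a b => ELet (unpair a) (unpair b)
  | EPair a b => EAdd (ELet (EAdd (unpair a) (unpair b)) tri_exp) (unpair b)
  | EFst a => ELet (unpair a) cfst_exp
  | ESnd a => ELet (unpair a) csnd_exp
  end.

Lemma eval_unpair e env : eval (unpair e) env = eval e env.
Proof.
elim: e env =>
  [i||a IH|a IH|a IHa b IHb|a IHa b IHb|a IHa b IHb|c IHc a IHa b IHb
  |a IHa b IHb k IHk|a IHa b IHb|a IHa b IHb|a IH|a IH] env //=.
- by rewrite IH.
- by rewrite IH.
- by rewrite IHa IHb.
- by rewrite IHa IHb.
- by rewrite IHa IHb.
- by rewrite IHc IHa IHb.
- by rewrite IHa IHk; apply: eq_iteri => i r; rewrite IHb.
- by rewrite IHa IHb.
- by rewrite eval_tri IHa IHb.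
- by rewrite eval_cfst IH.
- by rewrite eval_csnd IH.
Qed.

Lemma compilable_unpair e N : scoped e N -> compilable (unpair e) N.
Proof.
elim: e N =>
  [i||a IH|a IH|a IHa b IHb|a IHa b IHb|a IHa b IHb|c IHc a IHa b IHb
  |a IHa b IHb k IHk|a IHa b IHb|a IHa b IHb|a IH|a IH] N //=;
  case/and4P: (compilable_pairing_exps N) => ok_tri _ ok_snd ok_fst.
- exact: IH.
- exact: IH.
- by case/andP=> /IHa -> /IHb ->.
- by case/andP=> /IHa -> /IHb ->.
- by case/andP=> /IHa -> /IHb ->.
- by case/and3P=> /IHc -> /IHa -> /IHb ->.
- by case/and3P=> /IHa -> /IHb -> /IHk ->.
- by case/andP=> /IHa -> /IHb ->.
- by case/andP=> /IHa -> /IHb ->; rewrite ok_tri.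
- by move=> /IH ->; rewrite ok_fst.
- by move=> /IH ->; rewrite ok_snd.
Qed.

Definition pred_code := rPrec rZero (rProj 0).
Definition add_code := rPrec (rProj 0) (rComp rSucc [:: rProj 1]).
Definition sub_code :=
  rComp (rPrec (rProj 0) (rComp pred_code [:: rProj 1])) [:: rProj 1; rProj 0].
Definition mul_code := rPrec rZero (rComp add_code [:: rProj 1; rProj 2]).
Definition ifz_code := rPrec (rProj 0) (rProj 3).

Lemma prim_wf_arith_codes : [&& prim_wf pred_code 1, prim_wf add_code 2,
  prim_wf sub_code 2, prim_wf mul_code 2 & prim_wf ifz_code 3].
Proof. by []. Qed.

Lemma prim_eval_pred x : prim_eval pred_code [:: x] = x.-1.
Proof. by case: x. Qed.
Opaque pred_code.

Lemma prim_eval_add x y : prim_eval add_code [:: x; y] = x + y.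
Proof. by elim: x => //= x ->. Qed.
Opaque add_code.

Lemma prim_eval_sub x y : prim_eval sub_code [:: x; y] = x - y.
Proof. by elim: y => [|y IH]; rewrite ?subn0 // subnS -IH /= prim_eval_pred. Qed.

Lemma prim_eval_mul x y : prim_eval mul_code [:: x; y] = x * y.
Proof. by elim: x => //= x IH; rewrite prim_eval_add IH mulSn addnC. Qed.

Lemma prim_eval_ifz c a b :
  prim_eval ifz_code [:: c; a; b] = if c is 0 then a else b.
Proof. by case: c. Qed.

Opaque sub_code mul_code ifz_code.

Definition projs N := map rProj (iota 0 N).

Lemma prim_eval_projs env : map (fun g => prim_eval g env) (projs (size env)) = env.
Proof. by rewrite -map_comp; apply: (mkseq_nth 0). Qed.

Lemma prim_wf_projs N : all (fun g => prim_wf g N) (projs N).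
Proof. by rewrite all_map; apply/allP => i; rewrite mem_iota. Qed.

(* Pairs have no code of their own: they are first removed by [unpair]. *)
Fixpoint compile (N : nat) (e : exp) : rcode :=
  match e with
  | EVar i => rProj i
  | EZero => rZero
  | ESucc a => rComp rSucc [:: compile N a]
  | EPred a => rComp pred_code [:: compile N a]
  | EAdd a b => rComp add_code [:: compile N a; compile N b]
  | ESub a b => rComp sub_code [:: compile N a; compile N b]
  | EMul a b => rComp mul_code [:: compile N a; compile N b]
  | EIfz c a b => rComp ifz_code [:: compile N c; compile N a; compile N b]
  | ERec e0 e1 k =>
      rComp (rPrec (compile N e0) (compile N.+2 e1)) (compile N k :: projs N)
  | ELet a b => rComp (compile N.+1 b) (compile N a :: projs N)
  | EPair _ _ | EFst _ | ESnd _ => rZero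
  end.

Lemma prim_wf_compile e N : compilable e N -> prim_wf (compile N e) N.
Proof.
have /and5P[wf_pred wf_add wf_sub wf_mul wf_ifz] := prim_wf_arith_codes.
elim: e N =>
  [i||a IH|a IH|a IHa b IHb|a IHa b IHb|a IHa b IHb|c IHc a IHa b IHb
  |a IHa b IHb k IHk|a IHa b IHb|a IHa b IHb|a IH|a IH] N //=.
- by move/IH ->.
- by move/IH ->; rewrite wf_pred.
- by case/andP=> /IHa -> /IHb ->; rewrite wf_add.
- by case/andP=> /IHa -> /IHb ->; rewrite wf_sub.
- by case/andP=> /IHa -> /IHb ->; rewrite wf_mul.
- by case/and3P=> /IHc -> /IHa -> /IHb ->; rewrite wf_ifz.
- rewrite size_map size_iota prim_wf_projs.
  by case/and3P=> /IHa -> /IHb -> /IHk ->.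
- rewrite size_map size_iota prim_wf_projs.
  by case/andP=> /IHa -> /IHb ->.
Qed.

Lemma prim_eval_compile e env :
  compilable e (size env) -> prim_eval (compile (size env) e) env = eval e env.
Proof.
elim: e env =>
  [i||a IH|a IH|a IHa b IHb|a IHa b IHb|a IHa b IHb|c IHc a IHa b IHb
  |a IHa b IHb k IHk|a IHa b IHb|a IHa b IHb|a IH|a IH] env //=.
- by move/IH ->.
- by move/IH ->; rewrite prim_eval_pred.
- by case/andP=> /IHa -> /IHb ->; rewrite prim_eval_add.
- by case/andP=> /IHa -> /IHb ->; rewrite prim_eval_sub.
- by case/andP=> /IHa -> /IHb ->; rewrite prim_eval_mul.
- by case/and3P=> /IHc -> /IHa -> /IHb ->; rewrite prim_eval_ifz.
- case/and3P=> ha hb hk; rewrite prim_eval_projs /= IHa // IHk //.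
  by apply: eq_iteri => i r; rewrite -IHb.
- by case/andP=> ha hb; rewrite prim_eval_projs /= IHa // -IHb.
Qed.

Lemma reval_compile e env :
  scoped e (size env) -> reval (compile (size env) (unpair e)) env (eval e env).
Proof.
move=> /compilable_unpair ok_e; rewrite -eval_unpair -prim_eval_compile //.
by apply: reval_prim_eval; apply: prim_wf_compile.
Qed.

(** * A universal machine *)

(* Expressions as functions of the binding depth [d]: the variable bound at
   depth [l] is [hvar l], the de Bruijn index [d - l - 1], and binders hand the
   depth of their bound variables to their bodies. *)
Definition hexp := nat -> exp.
Definition hvar (l : nat) : hexp := fun d => EVar (d - l.+1).
Definition hlet (a : hexp) (b : nat -> hexp) : hexp := fun d => ELet (a d) (b d d.+1).
Definition hpair (a b : hexp) : hexp := fun d => EPair (a d) (b d).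
Definition hfst (a : hexp) : hexp := fun d => EFst (a d).
Definition hsnd (a : hexp) : hexp := fun d => ESnd (a d).
Definition hsucc (a : hexp) : hexp := fun d => ESucc (a d).
Definition hpred (a : hexp) : hexp := fun d => EPred (a d).
Definition hadd (a b : hexp) : hexp := fun d => EAdd (a d) (b d).
Definition hsub (a b : hexp) : hexp := fun d => ESub (a d) (b d).
Definition hifz (c a b : hexp) : hexp := fun d => EIfz (c d) (a d) (b d).
Definition hnum (n : nat) : hexp := fun _ => enum n.
Definition hrec (e0 : hexp) (e1 : nat -> nat -> hexp) (k : hexp) : hexp :=
  fun d => ERec (e0 d) (e1 d.+1 d d.+2) (k d).

Fixpoint hcase (x : hexp) (branches : seq hexp) (default : hexp) : hexp :=
  if branches is a :: bs then
    hifz x a (hlet (hpred x) (fun x' => hcase (hvar x') bs default))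
  else default.

Definition ccons h t := (cpair h t).+1.
Fixpoint encl (l : seq nat) : nat := if l is x :: l' then ccons x (encl l') else 0.

Definition hcons (h t : hexp) : hexp := hsucc (hpair h t).
Definition hhead (l : hexp) : hexp := hfst (hpred l).
Definition htail (l : hexp) : hexp := hsnd (hpred l).
Definition hnth (l i : hexp) : hexp :=
  hhead (hrec l (fun _ acc => htail (hvar acc)) i).

Fixpoint enc (c : rcode) : nat :=
  match c with
  | rZero => cpair 0 0
  | rSucc => cpair 1 0
  | rProj i => cpair 2 i
  | rComp f gs => cpair 3 (cpair (enc f) (encl (map enc gs)))
  | rPrec f g => cpair 4 (cpair (enc f) (enc g))
  | rMin f => cpair 5 (enc f)
  end.

(* A configuration is a stack of frames and a register holding the value
   returned by the frame last completed. *)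
Inductive frame :=
| FEval of nat & nat
| FEvalList of nat & nat
| FEvalCons of nat & nat
| FCons of nat
| FApply of nat
| FPrecStep of nat & nat & nat
| FMinSearch of nat & nat & nat.

Definition encF (f : frame) : nat :=
  match f with
  | FEval c xs => cpair 0 (cpair c xs)
  | FEvalList gs xs => cpair 1 (cpair gs xs)
  | FEvalCons g xs => cpair 2 (cpair g xs)
  | FCons l => cpair 3 l
  | FApply f => cpair 4 f
  | FPrecStep g k ys => cpair 5 (cpair g (cpair k ys))
  | FMinSearch f z xs => cpair 6 (cpair f (cpair z xs))
  end.

Definition encC (K : seq frame) (r : nat) := cpair (encl (map encF K)) r.

Definition hEval c xs := hpair (hnum 0) (hpair c xs).
Definition hEvalList gs xs := hpair (hnum 1) (hpair gs xs).
Definition hEvalCons g xs := hpair (hnum 2) (hpair g xs).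
Definition hCons l := hpair (hnum 3) l.
Definition hApply f := hpair (hnum 4) f.
Definition hPrecStep g k ys := hpair (hnum 5) (hpair g (hpair k ys)).
Definition hMinSearch f z xs := hpair (hnum 6) (hpair f (hpair z xs)).

(* The branches follow the tags of [enc] and of [encF]; a configuration with an
   empty stack is final. *)
Definition step_eval_hexp (c xs r rest : nat) : hexp :=
  hlet (hfst (hvar c)) (fun tag => hlet (hsnd (hvar c)) (fun arg =>
  hcase (hvar tag) [::
    hpair (hvar rest) (hnum 0);
    hpair (hvar rest) (hsucc (hhead (hvar xs)));
    hpair (hvar rest) (hnth (hvar xs) (hvar arg));
    hpair (hcons (hEvalList (hsnd (hvar arg)) (hvar xs))
                 (hcons (hApply (hfst (hvar arg))) (hvar rest))) (hvar r);
    hlet (hhead (hvar xs)) (fun k => hlet (htail (hvar xs)) (fun ys =>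
      hifz (hvar k)
        (hpair (hcons (hEval (hfst (hvar arg)) (hvar ys)) (hvar rest)) (hvar r))
        (hpair (hcons (hEval (hvar c) (hcons (hpred (hvar k)) (hvar ys)))
                  (hcons (hPrecStep (hsnd (hvar arg)) (hpred (hvar k)) (hvar ys))
                     (hvar rest))) (hvar r))));
    hpair (hcons (hEval (hvar arg) (hcons (hnum 0) (hvar xs)))
             (hcons (hMinSearch (hvar arg) (hnum 0) (hvar xs)) (hvar rest))) (hvar r)]
  (hvar 0))).

Definition step_hexp : hexp :=
  hifz (hfst (hvar 0)) (hvar 0)
  (hlet (hpred (hfst (hvar 0))) (fun stack =>
   hlet (hsnd (hvar 0)) (fun r =>
   hlet (hfst (hvar stack)) (fun fr =>
   hlet (hsnd (hvar stack)) (fun rest =>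
   hlet (hfst (hvar fr)) (fun tag =>
   hlet (hsnd (hvar fr)) (fun p =>
   hcase (hvar tag) [::
     hlet (hfst (hvar p)) (fun c => hlet (hsnd (hvar p)) (fun xs =>
       step_eval_hexp c xs r rest));
     hlet (hfst (hvar p)) (fun gs => hlet (hsnd (hvar p)) (fun xs =>
       hifz (hvar gs) (hpair (hvar rest) (hnum 0))
         (hpair (hcons (hEvalList (htail (hvar gs)) (hvar xs))
                  (hcons (hEvalCons (hhead (hvar gs)) (hvar xs)) (hvar rest)))
            (hvar r))));
     hlet (hfst (hvar p)) (fun g => hlet (hsnd (hvar p)) (fun xs =>
       hpair (hcons (hEval (hvar g) (hvar xs)) (hcons (hCons (hvar r)) (hvar rest)))
         (hvar r)));
     hpair (hvar rest) (hcons (hvar r) (hvar p));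
     hpair (hcons (hEval (hvar p) (hvar r)) (hvar rest)) (hvar r);
     hlet (hfst (hvar p)) (fun g => hlet (hsnd (hvar p)) (fun q =>
     hlet (hfst (hvar q)) (fun k => hlet (hsnd (hvar q)) (fun ys =>
       hpair (hcons (hEval (hvar g) (hcons (hvar k) (hcons (hvar r) (hvar ys))))
                (hvar rest)) (hvar r)))));
     hlet (hfst (hvar p)) (fun f => hlet (hsnd (hvar p)) (fun q =>
     hlet (hfst (hvar q)) (fun z => hlet (hsnd (hvar q)) (fun xs =>
       hifz (hvar r) (hpair (hvar rest) (hvar z))
         (hpair (hcons (hEval (hvar f) (hcons (hsucc (hvar z)) (hvar xs)))
                  (hcons (hMinSearch (hvar f) (hsucc (hvar z)) (hvar xs)) (hvar rest)))
            (hvar r))))))]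
   (hvar 0)))))))).

Definition step z := eval (step_hexp 1) [:: z].

Lemma nth_encl xs i : cfst (iteri i (fun _ r => csnd r.-1) (encl xs)).-1 = nth 0 xs i.
Proof.
have tail0 j : iter j (fun r => csnd r.-1) 0 = 0 by elim: j => //= j ->.
rewrite (_ : iteri _ _ _ = iter i (fun r => csnd r.-1) (encl xs)).
  elim: i xs => [|i IH] [|x xs]; rewrite ?tail0 //.
    by rewrite /= cfst_pair.
  by rewrite iterSr /= csnd_pair IH.
by elim: (i) => //= j ->.
Qed.

Ltac step_simpl :=
  rewrite /step /encC; simpl enc; simpl map; simpl encl; rewrite /ccons;
  cbv beta iota zeta delta [eval step_hexp step_eval_hexp hifz hlet hfst hsnd hvar
    hpred hpair hnum hsucc hhead htail hcons hnth hrec hcase hEval hEvalList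
    hEvalCons hCons hApply hPrecStep hMinSearch subn Nat.sub nth iter encF];
  repeat progress
    (rewrite ?cfst_pair ?csnd_pair; cbv beta iota zeta delta [predn Nat.pred]).

Section StepLemmas.
Variables (K : seq frame) (r : nat).

Lemma step_zero xs : step (encC (FEval (enc rZero) xs :: K) r) = encC K 0.
Proof. by step_simpl. Qed.

Lemma step_succ x xs :
  step (encC (FEval (enc rSucc) (encl (x :: xs)) :: K) r) = encC K x.+1.
Proof. by step_simpl. Qed.

Lemma step_proj i xs :
  step (encC (FEval (enc (rProj i)) (encl xs) :: K) r) = encC K (nth 0 xs i).
Proof. by step_simpl; rewrite nth_encl. Qed.

Lemma step_comp f gs xs : step (encC (FEval (enc (rComp f gs)) xs :: K) r) =
  encC (FEvalList (encl (map enc gs)) xs :: FApply (enc f) :: K) r.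
Proof. by step_simpl. Qed.

Lemma step_prec0 f g ys :
  step (encC (FEval (enc (rPrec f g)) (encl (0 :: ys)) :: K) r) =
  encC (FEval (enc f) (encl ys) :: K) r.
Proof. by step_simpl. Qed.

Lemma step_precS f g k ys :
  step (encC (FEval (enc (rPrec f g)) (encl (k.+1 :: ys)) :: K) r) =
  encC (FEval (enc (rPrec f g)) (encl (k :: ys)) :: FPrecStep (enc g) k (encl ys) :: K) r.
Proof. by step_simpl. Qed.

Lemma step_min f xs : step (encC (FEval (enc (rMin f)) xs :: K) r) =
  encC (FEval (enc f) (ccons 0 xs) :: FMinSearch (enc f) 0 xs :: K) r.
Proof. by step_simpl. Qed.

Lemma step_evals_nil xs : step (encC (FEvalList 0 xs :: K) r) = encC K 0.
Proof. by step_simpl. Qed.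

Lemma step_evals_cons g gs xs : step (encC (FEvalList (ccons g gs) xs :: K) r) =
  encC (FEvalList gs xs :: FEvalCons g xs :: K) r.
Proof. by step_simpl. Qed.

Lemma step_eval_cons g xs :
  step (encC (FEvalCons g xs :: K) r) = encC (FEval g xs :: FCons r :: K) r.
Proof. by step_simpl. Qed.

Lemma step_cons l : step (encC (FCons l :: K) r) = encC K (ccons r l).
Proof. by step_simpl. Qed.

Lemma step_apply f : step (encC (FApply f :: K) r) = encC (FEval f r :: K) r.
Proof. by step_simpl. Qed.

Lemma step_prec_step g k ys : step (encC (FPrecStep g k ys :: K) r) =
  encC (FEval g (ccons k (ccons r ys)) :: K) r.
Proof. by step_simpl. Qed.

End StepLemmas.

Lemma step_min_found f z xs K : step (encC (FMinSearch f z xs :: K) 0) = encC K z.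
Proof. by step_simpl. Qed.

Lemma step_min_next f z xs K v : step (encC (FMinSearch f z xs :: K) v.+1) =
  encC (FEval f (ccons z.+1 xs) :: FMinSearch f z.+1 xs :: K) v.+1.
Proof. by step_simpl. Qed.

Lemma step_halted z : cfst z = 0 -> step z = z.
Proof.
by move=> z0; rewrite /step; cbv beta iota zeta delta
  [eval step_hexp hifz hfst hvar subn Nat.sub nth]; rewrite z0.
Qed.

(** * Undecidability of halting *)

Definition reach a b := exists n, iter n step a = b.

Lemma reach_refl a : reach a a. Proof. by exists 0. Qed.

Lemma reach_step a b : reach (step a) b -> reach a b.
Proof. by case=> n h; exists n.+1; rewrite iterSr. Qed.

Lemma reach_trans a b c : reach a b -> reach b c -> reach a c.
Proof. by case=> n h [m h']; exists (m + n); rewrite iterD h. Qed.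

Lemma reach_min_search f xs y K r :
  (forall K r, reach (encC (FEval (enc f) (encl (y :: xs)) :: K) r) (encC K 0)) ->
  (forall z, z < y -> exists v, forall K r,
     reach (encC (FEval (enc f) (encl (z :: xs)) :: K) r) (encC K v.+1)) ->
  reach (encC (FEval (enc (rMin f)) (encl xs) :: K) r) (encC K y).
Proof.
move=> found miss.
have search z : z <= y -> exists w, reach (encC (FEval (enc (rMin f)) (encl xs) :: K) r)
    (encC (FEval (enc f) (encl (z :: xs)) :: FMinSearch (enc f) z (encl xs) :: K) w).
  elim: z => [|z IH] lt_zy.
    by exists r; apply: reach_step; rewrite step_min; apply: reach_refl.
  have [[w reach_z] [v miss_z]] := (IH (ltnW lt_zy), miss z lt_zy).
  exists v.+1; apply: reach_trans reach_z _; apply: reach_trans (miss_z _ _) _.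
  by apply: reach_step; rewrite step_min_next; apply: reach_refl.
have [w reach_y] := search y (leqnn y).
apply: reach_trans reach_y _; apply: reach_trans (found _ _) _.
by apply: reach_step; rewrite step_min_found; apply: reach_refl.
Qed.

Fixpoint reach_eval c xs y (H : reval c xs y) {struct H} :
  forall K r, reach (encC (FEval (enc c) (encl xs) :: K) r) (encC K y)
with reach_evals gs xs ys (H : revals gs xs ys) {struct H} :
  forall K r, reach (encC (FEvalList (encl (map enc gs)) (encl xs) :: K) r)
                    (encC K (encl ys)).
Proof.
- case: H => {c xs y} [xs|x xs|i xs y Hi|f gs xs ys y Hgs Hf|f g xs y Hf
                      |f g k xs r' y Hp Hg|f xs y H0 Hlt] K r.
  + by apply: reach_step; rewrite step_zero; apply: reach_refl.
  + by apply: reach_step; rewrite step_succ; apply: reach_refl.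
  + by apply: reach_step; rewrite step_proj (onth_nth 0 _ _ _ Hi); apply: reach_refl.
  + apply: reach_step; rewrite step_comp.
    apply: reach_trans (reach_evals _ _ _ Hgs _ _) _.
    by apply: reach_step; rewrite step_apply; apply: reach_eval Hf _ _.
  + by apply: reach_step; rewrite step_prec0; apply: reach_eval Hf _ _.
  + apply: reach_step; rewrite step_precS; apply: reach_trans (reach_eval _ _ _ Hp _ _) _.
    by apply: reach_step; rewrite step_prec_step; apply: reach_eval Hg _ _.
  + apply: reach_min_search => [K' r'|z /Hlt[v Hv]]; first exact: reach_eval H0 _ _.
    by exists v; apply: reach_eval Hv.
- case: H => {gs xs ys} [xs|g gs xs y ys Hg Hgs] K r.
  + by apply: reach_step; rewrite step_evals_nil; apply: reach_refl.
  + apply: reach_step; rewrite [map _ _]/= [encl _]/= step_evals_cons.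
    apply: reach_trans (reach_evals _ _ _ Hgs _ _) _.
    apply: reach_step; rewrite step_eval_cons.
    apply: reach_trans (reach_eval _ _ _ Hg _ _) _.
    by apply: reach_step; rewrite step_cons; apply: reach_refl.
Qed.

Definition run c xs k := iter k step (encC [:: FEval c (encl xs)] 0).

Lemma run_halted c xs k t : cfst (run c xs k) = 0 -> k <= t -> cfst (run c xs t) = 0.
Proof.
move=> halted /subnK <-; elim: (t - k) => // j IH.
by rewrite addSn /run iterS step_halted.
Qed.

Lemma run_reval c xs y : reval c xs y -> exists k, run (enc c) xs k = encC [::] y.
Proof. by move=> /reach_eval /(_ [::] 0). Qed.

Lemma run_min_diverges f xs v : (forall z, reval f (z :: xs) v.+1) ->
  forall k, cfst (run (enc (rMin f)) xs k) != 0.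
Proof.
move=> miss k; apply/eqP => halted.
have search z : exists t w, z <= t /\ run (enc (rMin f)) xs t =
    encC [:: FEval (enc f) (encl (z :: xs)); FMinSearch (enc f) z (encl xs)] w.
  elim: z => [|z [t [w [le_zt run_t]]]]; first by exists 1, 0; rewrite /run /= step_min.
  have [n run_n] := reach_eval (miss z) [:: FMinSearch (enc f) z (encl xs)] w.
  exists (n + t).+1, v.+1; split; first lia.
  by rewrite /run iterS iterD -/(run _ _ t) run_t run_n step_min_next.
have [t [w [le_kt run_t]]] := search k.
by have := run_halted halted le_kt; rewrite run_t /encC cfst_pair.
Qed.

Definition halted n k := cfst (run n [:: n] k) == 0.
Definition halts n := exists k, halted n k.

Lemma halted_mono n k t : halted n k -> k <= t -> halted n t.
Proof. by rewrite /halted => /eqP halted_k /(run_halted halted_k) ->. Qed.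

Definition rec_decidable (P : nat -> Prop) :=
  exists d, forall n, exists v, reval d [:: n] v /\ (v = 0 <-> ~ P n).

Lemma rec_decidable_ext (P Q : nat -> Prop) :
  (forall n, P n <-> Q n) -> rec_decidable P -> rec_decidable Q.
Proof.
move=> PQ [d dP]; exists d => n; have [v [d_n vP]] := dP n.
by exists v; split=> //; rewrite vP; split=> nP /PQ.
Qed.

Lemma rec_decidableN P : rec_decidable P -> rec_decidable (fun n => ~ P n).
Proof.
pose e := ESub (ESucc EZero) (EVar 0).
case=> d dP; exists (rComp (compile 1 (unpair e)) [:: d]) => n.
have [v [d_n vP]] := dP n; exists (1 - v); split.
  by apply: reComp (reval_compile (env := [:: v]) _); do !constructor.
rewrite not_notE; split=> [v_pos | Pn].
  have [//|/(proj2 vP) v0] := pselect (P n).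
  by move: v_pos; rewrite v0.
by case: v vP {d_n} => [/proj1/(_ erefl)/(_ Pn) | v].
Qed.

Theorem halting_undecidable : ~ rec_decidable halts.
Proof.
(* The search [rMin f] on its own code [e] halts iff [d] says it does not. *)
case=> d decides.
pose f := rComp d [:: rProj 1]; pose e := enc (rMin f).
have [v [d_e d_eP]] := decides e.
have f_z z : reval f [:: z; e] v by apply: reComp d_e; do 2!constructor.
case: v d_e d_eP f_z => [|v] _ d_eP f_z.
  apply: (proj1 d_eP erefl).
  have min_e : reval (rMin f) [:: e] 0 by apply: reMin.
  have [k run_k] := run_reval min_e.
  by exists k; rewrite /halted run_k /encC cfst_pair.
suff : v.+1 = 0 by [].
by apply/d_eP => -[k]; apply/negP: (run_min_diverges f_z k).
Qed.

(** * Recursive approximations of the halting times *)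

Lemma scoped_step : scoped (step_hexp 1) 1.
Proof. by vm_compute. Qed.

Lemma eval_step z env : eval (step_hexp 1) (z :: env) = step z.
Proof. by rewrite -cat1s eval_cat //; apply: scoped_step. Qed.
Opaque step_hexp.

(* [step_hexp 1] reads its argument at index 0. *)
Definition hstep (a : hexp) : hexp := fun d => ELet (a d) (step_hexp 1).
Definition init_hexp (c : hexp) : hexp :=
  hpair (hcons (hEval c (hcons c (hnum 0))) (hnum 0)) (hnum 0).
Definition halted_hexp (c k : hexp) : hexp :=
  hifz (hfst (hrec (init_hexp c) (fun _ acc => hstep (hvar acc)) k)) (hnum 1) (hnum 0).

Lemma eval_halted_hexp c k d env :
  eval (halted_hexp c k d) env = halted (eval (c d) env) (eval (k d) env).
Proof.
rewrite /halted /run -iteri_iter /= subSnn (@eq_iteri _ _ (fun _ => step)).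
  by case: cfst.
by move=> i r; rewrite eval_step.
Qed.
Opaque halted_hexp.

Definition steps_running n k := \sum_(j < k) ~~ halted n j.

Definition steps_running_hexp : hexp := hrec (hnum 0)
  (fun j acc => hadd (hvar acc) (hsub (hnum 1) (halted_hexp (hvar 1) (hvar j)))) (hvar 0).
Definition halt_denom_hexp : hexp :=
  hrec (hnum 1) (fun _ acc => hadd (hvar acc) (hvar acc)) (hsucc steps_running_hexp).

Lemma eval_steps_running n k : eval (steps_running_hexp 2) [:: n; k] = steps_running n k.
Proof.
rewrite [LHS]/= (@eq_iteri _ _ (fun j r => r + ~~ halted n j)).
  by rewrite /steps_running; elim: k => [|k IH]; rewrite ?big_ord0 // big_ord_recr /= IH.
by move=> j r; rewrite /= eval_halted_hexp /=; case: halted.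
Qed.
Opaque steps_running_hexp.

Lemma eval_halt_denom n k :
  eval (halt_denom_hexp 2) [:: n; k] = 2 ^ (steps_running n k).+1.
Proof.
have pow2 j : iteri j (fun _ r => r + r) 1 = 2 ^ j.
  by elim: j => //= j ->; rewrite expnS mul2n addnn.
by rewrite -pow2 -eval_steps_running.
Qed.

Lemma recursive2_exp (f : nat -> nat -> nat) e :
  scoped e 2 -> (forall n k, eval e [:: n; k] = f n k) -> recursive2 f.
Proof.
move=> e2 ef; exists (compile 2 (unpair e)) => n k.
by rewrite -ef; apply: (reval_compile (env := [:: n; k])).
Qed.

Lemma recursive2_halted : recursive2 (fun n k => halted n k).
Proof.
apply: (recursive2_exp (e := halted_hexp (hvar 1) (hvar 0) 2)) => [|n k].
  by vm_compute.
by rewrite eval_halted_hexp.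
Qed.

Lemma recursive2_halt_denom : recursive2 (fun n k => 2 ^ (steps_running n k).+1).
Proof. by apply: recursive2_exp (eval_halt_denom); vm_compute. Qed.

Lemma recursive2_const c : recursive2 (fun _ _ => c).
Proof. by apply: (recursive2_exp (e := hnum c 0)) => [|n k]; elim: c => //= c ->. Qed.

Lemma recursive_eval3 e (a b s : nat -> nat -> nat) k :
    scoped e 3 -> recursive2 a -> recursive2 b -> recursive2 s ->
  exists d, forall n, reval d [:: n] (eval e [:: a n k; b n k; s n k]).
Proof.
move=> e3 [ca caP] [cb cbP] [cs csP].
pose at_k c := rComp c [:: rProj 0; compile 1 (unpair (enum k))].
have at_kP c (f : nat -> nat -> nat) : (forall n k, reval c [:: n; k] (f n k)) ->
    forall n, reval (at_k c) [:: n] (f n k).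
  move=> cP n; apply: reComp (cP n k); constructor; first by constructor.
  constructor; last by constructor.
  by have := reval_compile (env := [:: n]) (scoped_enum k 1); rewrite eval_enum.
exists (rComp (compile 3 (unpair e)) [:: at_k ca; at_k cb; at_k cs]) => n.
apply: reComp (reval_compile (env := [:: a n k; b n k; s n k]) e3).
by do !constructor; apply: at_kP.
Qed.

Definition threshold_test (p q : nat) : exp :=
  EIfz (ERec EZero (ESub (enum 1) (EVar 1)) (EVar 2))
    (EIfz (ESub (ESucc (EMul (enum p) (EVar 1))) (EMul (enum q) (EVar 0)))
       (enum 1) EZero)
    EZero.

Lemma eval_threshold_test p q a b s :
  eval (threshold_test p q) [:: a; b; s] = ~~ odd s && (p * b < q * a).
Proof.
have parity : iteri s (fun _ r => 1 - r) 0 = odd s.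
  by elim: s => //= s ->; case: odd.
by rewrite /= !eval_enum parity /leq; case: odd => //=; case: (_ - _).
Qed.

Lemma scoped_threshold_test p q : scoped (threshold_test p q) 3.
Proof. by rewrite /= !scoped_enum. Qed.

Local Open Scope ring_scope.

(** * A computable real sequence encoding halting *)

Section ComputableReals.
Variable R : realType.

Lemma computable_seqR_ext (x y : nat -> R) :
  x =1 y -> computable_seqR x -> computable_seqR y.
Proof. by move=> /funext ->. Qed.

Lemma inv_pow2_gt0 k : 0 < (2%:R ^+ k : R)^-1.
Proof. by rewrite invr_gt0 exprn_gt0. Qed.

Lemma computable_seqR_nat (c : nat) : computable_seqR (fun _ => c%:R : R).
Proof.
exists (fun _ _ => c), (fun _ _ => 1%N), (fun _ _ => 0%N).
split; try exact: recursive2_const; first by [].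
move=> n k; rewrite /rat_of expr0 mul1r divr1 subrr normr0.
exact: ltW (inv_pow2_gt0 k).
Qed.

Lemma threshold_test_rat (p q a b s : nat) : (0 < q)%N -> (0 < b)%N ->
  (~~ odd s && (p * b < q * a)%N) = (p%:R / q%:R < rat_of R s a b).
Proof.
move=> q_gt0 b_gt0; rewrite /rat_of -signr_odd; case: (odd s) => /=.
  apply/esym/negbTE; rewrite -leNgt expr1 mulN1r.
  by apply: (@le_trans _ _ 0); rewrite ?oppr_le0 divr_ge0 ?ler0n.
rewrite expr0 mul1r ltr_pdivrMr ?ltr0n // mulrAC ltr_pdivlMr ?ltr0n //.
by rewrite -!natrM ltr_nat [(a * q)%N]mulnC.
Qed.

Lemma rec_decidable_threshold (y : nat -> R) (p q : nat) (P : nat -> Prop) :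
    (0 < q)%N -> computable_seqR y ->
    (forall n, P n -> p%:R / q%:R + 2^-1 <= y n) ->
    (forall n, ~ P n -> y n <= p%:R / q%:R - 2^-1) ->
  rec_decidable P.
Proof.
move=> q_gt0 [a [b [s [ra rb rs b_neq0 approx]]]] yP yNP.
have [d dP] := recursive_eval3 2 (scoped_threshold_test p q) ra rb rs.
exists d => n; eexists; split; first exact: dP.
have b_gt0 : (0 < b n 2)%N by rewrite lt0n; apply/eqP.
rewrite eval_threshold_test threshold_test_rat //.
have y_n := conj (@yP n) (@yNP n).
have := approx n 2%N; rewrite (_ : 2%:R ^+ 2 = 4 :> R) ?expr2 -?natrM //.
set r := rat_of _ _ _ _; set t := p%:R / q%:R in y_n *.
rewrite ler_norml => /andP[r_lo r_hi].
(* [r] is within 1/4 of [y n], which is at least 1/2 away from [t]. *)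
have [Pn|nPn] := pselect (P n).
  have /idP-> : t < r by have := y_n.1 Pn; lra.
  by split=> // /(_ Pn).
have /negbTE-> : ~~ (t < r) by rewrite -leNgt; have := y_n.2 nPn; lra.
by split.
Qed.

Definition halt_value n : R :=
  if pselect (halts n) is left hn then (2%:R ^+ (ex_minn hn).+1)^-1 else 0.

Lemma halt_value_halts n : halts n ->
  exists2 T, halt_value n = (2%:R ^+ T.+1)^-1 & forall k, halted n k = (T <= k)%N.
Proof.
rewrite /halt_value; case: pselect => // hn _; exists (ex_minn hn) => //.
case: ex_minnP => T halted_T T_min k.
by apply/idP/idP => [/T_min | /(halted_mono halted_T)].
Qed.

Lemma halt_value_nhalts n : ~ halts n -> halt_value n = 0.
Proof. by rewrite /halt_value; case: pselect. Qed.

Lemma steps_running_min n T k :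
  (forall j, halted n j = (T <= j)%N) -> steps_running n k = minn k T.
Proof.
move=> haltedE; rewrite /steps_running.
elim: k => [|k IH]; first by rewrite big_ord0 min0n.
by rewrite big_ord_recr /= IH haltedE; case: (leqP T k) => le_Tk; lia.
Qed.

Lemma computable_halt_value : computable_seqR halt_value.
Proof.
exists (fun n k => halted n k), (fun n k => 2 ^ (steps_running n k).+1)%N.
exists (fun _ _ => 0%N); split.
- exact: recursive2_halted.
- exact: recursive2_halt_denom.
- exact: recursive2_const.
- by move=> n k; apply/eqP; rewrite expn_eq0.
move=> n k; rewrite /rat_of expr0 mul1r.
have [hn|nhn] := pselect (halts n); last first.
  have /negbTE-> : ~~ halted n k by apply/negP => halted_k; apply: nhn; exists k.
  by rewrite halt_value_nhalts // mul0r subrr normr0 ltW ?inv_pow2_gt0.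
have [T -> haltedE] := halt_value_halts hn.
rewrite haltedE (steps_running_min k haltedE); case: (leqP T k) => le_Tk /=.
  by rewrite mul1r natrX subrr normr0 ltW ?inv_pow2_gt0.
rewrite mul0r sub0r normrN gtr0_norm ?inv_pow2_gt0 //.
by rewrite lef_pV2 ?posrE ?exprn_gt0 // ler_eXn2l ?ltr1n //; lia.
Qed.

Lemma halt_value_ge0 n : 0 <= halt_value n.
Proof.
have [/halt_value_halts[T -> _]|/halt_value_nhalts ->] := pselect (halts n) => //.
exact: ltW (inv_pow2_gt0 _).
Qed.

Lemma halt_value_inv_ge2 n : halts n -> 2 <= (halt_value n)^-1.
Proof.
case/halt_value_halts=> T -> _; rewrite invrK -[X in X <= _]expr1.
by rewrite ler_eXn2l ?ltr1n.
Qed.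

Lemma halt_value_neq0 n : halts n -> halt_value n != 0.
Proof.
by move=> /halt_value_inv_ge2; apply: contraTneq => ->; rewrite invr0; lra.
Qed.

Lemma not_computable_above (y : nat -> R) (p q : nat) : (0 < q)%N ->
    (forall n, halts n -> p%:R / q%:R + 2^-1 <= y n) ->
    (forall n, ~ halts n -> y n <= p%:R / q%:R - 2^-1) ->
  ~ computable_seqR y.
Proof.
move=> q_gt0 hi lo cy.
exact: halting_undecidable (rec_decidable_threshold q_gt0 cy hi lo).
Qed.

Lemma not_computable_below (y : nat -> R) (p q : nat) : (0 < q)%N ->
    (forall n, halts n -> y n <= p%:R / q%:R - 2^-1) ->
    (forall n, ~ halts n -> p%:R / q%:R + 2^-1 <= y n) ->
  ~ computable_seqR y.
Proof.
move=> q_gt0 lo hi cy; apply: halting_undecidable.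
apply: rec_decidable_ext (rec_decidableN (rec_decidable_threshold q_gt0 cy hi _)).
  by move=> n; rewrite not_notE.
by move=> n; rewrite not_notE; apply: lo.
Qed.

Lemma not_computable_inv_halt_value : ~ computable_seqR (fun n => (halt_value n)^-1).
Proof.
apply: (@not_computable_above _ 1 1) => // n; rewrite divr1.
  by move/halt_value_inv_ge2; lra.
by move/halt_value_nhalts ->; rewrite invr0; lra.
Qed.

Lemma not_computable_halt_value_eq0 :
  ~ computable_seqR (fun n => (halt_value n == 0)%:R : R).
Proof.
apply: (@not_computable_below _ 1 2) => // n.
  by move/halt_value_neq0/negbTE ->; rewrite /=; lra.
by move/halt_value_nhalts ->; rewrite eqxx /=; lra.
Qed.

Lemma not_computable_halt_value_cond : ~ computable_seqR (fun n =>
  Num.sqrt (halt_value n ^+ 2 + 1) * Num.sqrt ((halt_value n)^-1 ^+ 2 + 1)).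
Proof.
apply: (@not_computable_above _ 3 2) => // n; last first.
  by move/halt_value_nhalts ->; rewrite invr0 expr0n add0r sqrtr1 mulr1; lra.
move=> hn; have x_ge0 := halt_value_ge0 n; have xV_ge2 := halt_value_inv_ge2 hn.
have sqrt_ge1 : 1 <= Num.sqrt (halt_value n ^+ 2 + 1).
  by rewrite -[X in X <= _]sqrtr1 ler_sqrt ?lerDr ?sqr_ge0 ?addr_ge0 ?sqr_ge0.
have sqrt_ge2 : 2 <= Num.sqrt ((halt_value n)^-1 ^+ 2 + 1).
  apply: le_trans xV_ge2 _; rewrite -[X in X <= _]ger0_norm ?invr_ge0 // -sqrtr_sqr.
  by rewrite ler_sqrt ?lerDl ?addr_ge0 ?sqr_ge0.
have := ler_pM ler01 (ler0n _ 2) sqrt_ge1 sqrt_ge2; rewrite mul1r; lra.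
Qed.

End ComputableReals.
(** * Rectangular diagonal matrices and their pseudoinverses *)

Section RectangularDiagonal.
Local Open Scope sesquilinear_scope.
Variable R : realType.
Local Notation C := R[i].

Definition rdiag p q (f : nat -> C) : 'M[C]_(p, q) :=
  \matrix_(i, j) if i == j :> nat then f i else 0.

Lemma eq_rdiag p q (f g : nat -> C) :
  (forall i, (i < p)%N -> (i < q)%N -> f i = g i) -> rdiag p q f = rdiag p q g.
Proof.
move=> fg; apply/matrixP => i j; rewrite !mxE.
by case: eqP => // ij; rewrite fg // ij.
Qed.

Lemma mul_rdiag p q r (f g : nat -> C) :
  rdiag p q f *m rdiag q r g = rdiag p r (fun i => if (i < q)%N then f i * g i else 0).
Proof.
apply/matrixP => i j; rewrite !mxE; case: ltnP => [lt_iq | ge_iq].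
  rewrite (bigD1 (Ordinal lt_iq)) //= !mxE eqxx big1 ?addr0 => [|k ne_ki].
    by case: eqP; rewrite ?mulr0.
  rewrite !mxE (_ : (i == k :> nat) = false) ?mul0r //.
  by apply/negbTE; apply: contra ne_ki => /eqP ik; apply/eqP/val_inj.
rewrite if_same big1 // => k _; rewrite !mxE; case: eqP => [ik|]; last by rewrite mul0r.
by have := ltn_ord k; rewrite -ik ltnNge ge_iq.
Qed.

Lemma trmxC_rdiag p q (f : nat -> C) : (rdiag p q f)^t* = rdiag q p (fun i => (f i)^*).
Proof.
apply/matrixP => i j; rewrite !mxE eq_sym.
by case: eqP => [->|]; rewrite ?conjC0.
Qed.

Lemma trmxC_mul p q r (A : 'M[C]_(p, q)) (B : 'M[C]_(q, r)) :
  (A *m B)^t* = B^t* *m A^t*.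
Proof. by rewrite trmx_mul map_mxM. Qed.

Lemma is_pinv_uniq p q (A : 'M[C]_(p, q)) X Y : is_pinv A X -> is_pinv A Y -> X = Y.
Proof.
case=> [AXA XAX AX_sa XA_sa] [AYA YAY AY_sa YA_sa].
have AXY : A *m X = A *m Y.
  rewrite -[LHS]AX_sa trmxC_mul -{1}AYA (trmxC_mul (A *m Y)) mulmxA -trmxC_mul.
  by rewrite AX_sa AY_sa mulmxA AXA.
have XYA : X *m A = Y *m A.
  rewrite -[LHS]XA_sa trmxC_mul -{1}AYA -mulmxA trmxC_mul -mulmxA -trmxC_mul.
  by rewrite XA_sa YA_sa mulmxA -(mulmxA Y A X) -mulmxA AXA.
by rewrite -XAX XYA -mulmxA AXY mulmxA YAY.
Qed.

Lemma pinv_eq p q (A : 'M[C]_(p, q)) X : is_pinv A X -> pinv A = X.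
Proof.
move=> AX; apply: (is_pinv_uniq (A := A)) => //.
by apply: (xgetPex 0 (P := [set X | is_pinv A X])); exists X.
Qed.

Lemma divffK (z : C) : z / z * z = z.
Proof. by have [->|nz] := eqVneq z 0; rewrite ?mulr0 ?mul0r // mulfV // mul1r. Qed.

Lemma conjC_divff (z : C) : (z / z)^* = z / z.
Proof. by have [->|nz] := eqVneq z 0; rewrite ?mul0r ?conjC0 // mulfV // conjC1. Qed.

Lemma pinv_rdiag p q (f : nat -> C) : pinv (rdiag p q f) = rdiag q p (fun i => (f i)^-1).
Proof.
apply: pinv_eq; split; rewrite ?mul_rdiag ?trmxC_rdiag;
  apply: eq_rdiag => i ip iq; rewrite ?ip ?iq /=.
- exact: divffK.
- by have := divffK (f i)^-1; rewrite invrK.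
- by case: ifP; rewrite ?conjC0 // conjC_divff.
- by case: ifP; rewrite ?conjC0 // mulrC conjC_divff.
Qed.

End RectangularDiagonal.

Section TestMatrices.
Local Open Scope classical_set_scope.
Variable R : realType.
Local Notation C := R[i].

Definition diag2 (x b : R) : nat -> C := nth 0 [:: x%:C; b%:C]%C.

Lemma diag2_inv x b i : (diag2 x b i)^-1 = diag2 x^-1 b^-1 i.
Proof.
by case: i => [|[|i]]; rewrite /diag2 /= ?nth_nil ?invr0 //; apply/esym/fmorphV.
Qed.

Lemma cabs2_real (x : R) : cabs2 x%:C%C = x ^+ 2.
Proof. by rewrite /cabs2 /= expr0n addr0. Qed.

Lemma cabs20 : cabs2 (0 : C) = 0.
Proof. by rewrite /cabs2 /= expr0n addr0. Qed.

Lemma frob_rdiag p q (f : nat -> C) :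
  frob (rdiag p q f) = Num.sqrt (\sum_(i < p) if (i < q)%N then cabs2 (f i) else 0).
Proof.
rewrite /frob; congr Num.sqrt; apply: eq_bigr => i _.
case: ltnP => [lt_iq|ge_iq].
  rewrite (bigD1 (Ordinal lt_iq)) //= mxE eqxx big1 ?addr0 // => j ne_ji.
  rewrite mxE (_ : (i == j :> nat) = false) ?cabs20 //.
  by apply/negbTE; apply: contra ne_ji => /eqP ij; apply/eqP/val_inj.
apply: big1 => j _; rewrite mxE; case: eqP => [ij|_]; last exact: cabs20.
by have := ltn_ord j; rewrite -ij ltnNge ge_iq.
Qed.

Lemma frob_rdiag2 p q x b :
  frob (rdiag p.+2 q.+2 (diag2 x b)) = Num.sqrt (x ^+ 2 + b ^+ 2).
Proof.
rewrite frob_rdiag !big_ord_recl big1 ?addr0 => [|i _]; first by rewrite /= !cabs2_real.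
by rewrite /diag2 /= nth_nil cabs20 if_same.
Qed.

Lemma norm2_rdiag_col p (f : nat -> C) :
  norm2 (rdiag p.+1 1 f) = Num.sqrt (cabs2 (f 0%N)).
Proof. by rewrite /norm2 frob_rdiag big_ord_recl big1 ?addr0. Qed.

Lemma pinv_rdiag2 p q x b :
  pinv (rdiag p q (diag2 x b)) = rdiag q p (diag2 x^-1 b^-1).
Proof. by rewrite pinv_rdiag; apply: eq_rdiag => i _ _; rewrite diag2_inv. Qed.

Lemma rdiagB p q (f g : nat -> C) :
  rdiag p q f - rdiag p q g = rdiag p q (fun i => f i - g i).
Proof. by apply/matrixP => i j; rewrite !mxE; case: eqP; rewrite ?subr0. Qed.

Lemma mul_rdiag_col p q (f : nat -> C) (v : 'cV[C]_q.+1) :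
  (forall i, (0 < i)%N -> f i = 0) ->
  rdiag p.+1 q.+1 f *m v = rdiag p.+1 1 (fun _ => f 0%N * v ord0 ord0).
Proof.
move=> f_supp; apply/matrixP => i j; rewrite ord1 !mxE.
case: (unliftP ord0 i) => [i'|] ->.
  apply: big1 => k _; rewrite mxE; case: eqP => [_|_]; last by rewrite mul0r.
  by rewrite f_supp ?mul0r.
rewrite (bigD1 ord0) //= mxE eqxx big1 ?addr0 // => k ne_k0.
by rewrite mxE (_ : (0 == k :> nat) = false) ?mul0r // eq_sym; apply: negbTE.
Qed.

Definition unit_col p : 'cV[C]_p.+1 := rdiag p.+1 1 (fun _ => 1).

Lemma lsq_sol_rdiag2 p q x :
  lsq_sol (rdiag p.+1 q.+1 (diag2 x 0)) (unit_col p) = rdiag q.+1 1 (fun _ => x^-1%:C%C).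
Proof.
rewrite /lsq_sol pinv_rdiag2 mul_rdiag; apply: eq_rdiag => -[|//] _ _ /=.
by rewrite mulr1.
Qed.

Lemma norm2_residual_rdiag2 p q x v :
  norm2 (rdiag p.+1 q.+1 (diag2 x 0) *m v - unit_col p) =
  Num.sqrt (cabs2 (x%:C%C * v ord0 ord0 - 1)).
Proof.
rewrite mul_rdiag_col; last by case=> [|[|i]] // _; rewrite /diag2 /= ?raddf0 ?nth_nil.
by rewrite rdiagB norm2_rdiag_col.
Qed.

Lemma lsq_res_rdiag2 p q x :
  lsq_res (rdiag p.+1 q.+1 (diag2 x 0)) (unit_col p) = (x == 0)%:R.
Proof.
rewrite /lsq_res; under eq_imagel => v _ do rewrite norm2_residual_rdiag2.
have [->|x_neq0] := eqVneq x 0.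
  rewrite (_ : [set _ | _ in _] = [set 1]) ?inf1 //.
  have res1 v : Num.sqrt (cabs2 ((0 : R)%:C%C * v ord0 ord0 - 1)) = 1.
    by rewrite raddf0 mul0r sub0r /cabs2 /= sqrrN expr1n oppr0 expr0n addr0 sqrtr1.
  apply/seteqP; split=> [_ [v _ <-] | _ ->] /=; first by rewrite res1.
  by exists 0; rewrite // res1.
set S := [set _ | _ in _].
have S_ge0 : lbound S 0 by move=> _ [v _ <-]; apply: sqrtr_ge0.
have S0 : S 0.
  exists (rdiag q.+1 1 (fun _ => x^-1%:C%C)) => //.
  by rewrite mxE /= -rmorphM mulfV // rmorph1 subrr cabs20 sqrtr0.
apply/eqP; rewrite eq_le; apply/andP; split.
  by apply: (ge_inf (E := S)) => //; exists 0.
by apply: lb_le_inf => //; exists 0.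
Qed.

Lemma computable_seqC_real (y : nat -> R) :
  computable_seqR y -> computable_seqC (fun k => (y k)%:C%C).
Proof. by split=> //; apply: computable_seqR_ext (computable_seqR_nat R 0). Qed.

Lemma computable_seqC0 : computable_seqC (fun _ => 0 : C).
Proof. by split; apply: computable_seqR_ext (computable_seqR_nat R 0). Qed.

Lemma computable_seqM_rdiag p q (f : nat -> nat -> C) :
  (forall i, computable_seqC (fun k => f k i)) ->
  computable_seqM (fun k => rdiag p q (f k)).
Proof.
move=> cf i j; rewrite /rdiag; under [fun k => _]funext => k do rewrite mxE.
by case: eqP => _; [apply: cf | apply: computable_seqC0].
Qed.

Lemma computable_seqM_rdiag2 p q (y : nat -> R) (c : nat) : computable_seqR y ->
  computable_seqM (fun k => rdiag p q (diag2 (y k) c%:R)).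
Proof.
move=> cy; apply: computable_seqM_rdiag => -[|[|i]]; rewrite /diag2 /=.
- exact: computable_seqC_real.
- exact/computable_seqC_real/computable_seqR_nat.
- by under [fun k => _]funext => k do rewrite nth_nil; apply: computable_seqC0.
Qed.

Lemma computable_seqM_unit_col p : computable_seqM (fun _ => unit_col p).
Proof.
apply: computable_seqM_rdiag => i; rewrite -(rmorph1 (real_complex R)).
exact/computable_seqC_real/(computable_seqR_nat R 1).
Qed.

End TestMatrices.

(** * Reduction to the halting problem *)

Section NotBMComputable.
Variables (R : realType) (m n : nat).
Local Notation x := (halt_value R).

Let test_mx (b : nat) k := rdiag m.+2 n.+2 (diag2 (x k) b%:R).

Let computable_test_mx b : computable_seqM (test_mx b).
Proof. exact/computable_seqM_rdiag2/computable_halt_value. Qed.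

Let computable_test_pair :
  computable_seqMV (fun k => (test_mx 0 k, unit_col R m.+1)).
Proof. by split; [apply: computable_test_mx | apply: computable_seqM_unit_col]. Qed.

Let sqrt_inv_sqr_halt_value k : Num.sqrt ((x k)^-1 ^+ 2) = (x k)^-1.
Proof. by rewrite sqrtr_sqr ger0_norm // invr_ge0 halt_value_ge0. Qed.

Lemma pinv_not_BM_computable :
  ~ BM_computable (@computable_seqM R m.+2 n.+2) (@computable_seqM R n.+2 m.+2)
    (fun A => pinv A).
Proof.
move=> /(_ _ (computable_test_mx 0) ord0 ord0) [re_pinv _].
apply/not_computable_inv_halt_value/(computable_seqR_ext _ re_pinv) => k.
by rewrite pinv_rdiag2 mxE.
Qed.

Lemma frob_pinv_not_BM_computable :
  ~ BM_computable (@computable_seqM R m.+2 n.+2) (@computable_seqR R)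
    (fun A => frob (pinv A)).
Proof.
move=> /(_ _ (computable_test_mx 0)) frob_pinv.
apply/not_computable_inv_halt_value/(computable_seqR_ext _ frob_pinv) => k.
by rewrite pinv_rdiag2 frob_rdiag2 invr0 expr0n addr0 sqrt_inv_sqr_halt_value.
Qed.

Lemma lsq_res_not_BM_computable : ~ BM_computable (@computable_seqMV R m.+2 n.+2)
  (@computable_seqR R) (fun Ab => lsq_res Ab.1 Ab.2).
Proof.
move=> /(_ _ computable_test_pair) res.
apply/not_computable_halt_value_eq0/(computable_seqR_ext _ res) => k.
by rewrite /= lsq_res_rdiag2.
Qed.

Lemma lsq_sol_not_BM_computable : ~ BM_computable (@computable_seqMV R m.+2 n.+2)
  (@computable_seqM R n.+2 1) (fun Ab => lsq_sol Ab.1 Ab.2).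
Proof.
move=> /(_ _ computable_test_pair ord0 ord0) [re_sol _].
apply/not_computable_inv_halt_value/(computable_seqR_ext _ re_sol) => k.
by rewrite /= lsq_sol_rdiag2 mxE.
Qed.

Lemma norm_lsq_sol_not_BM_computable : ~ BM_computable (@computable_seqMV R m.+2 n.+2)
  (@computable_seqR R) (fun Ab => norm2 (lsq_sol Ab.1 Ab.2)).
Proof.
move=> /(_ _ computable_test_pair) norm_sol.
apply/not_computable_inv_halt_value/(computable_seqR_ext _ norm_sol) => k.
by rewrite /= lsq_sol_rdiag2 norm2_rdiag_col cabs2_real sqrt_inv_sqr_halt_value.
Qed.

Lemma cond_not_BM_computable : ~ BM_computable (@computable_seqM R m.+2 n.+2)
  (@computable_seqR R) (fun A => frob A * frob (pinv A)).
Proof.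
move=> /(_ _ (computable_test_mx 1)) cond.
apply/not_computable_halt_value_cond/(computable_seqR_ext _ cond) => k.
by rewrite /test_mx pinv_rdiag2 !frob_rdiag2 invr1 expr1n.
Qed.

End NotBMComputable.

Theorem theorem3p1 (R : realType) (m n : nat) (hm : (2 <= m)%N) (hn : (2 <= n)%N) :
  (* (I) A |-> A^dagger *)
  ~ BM_computable (@computable_seqM R m n) (@computable_seqM R n m)
      (fun A => pinv A) /\
  (* (II) A |-> ||A^dagger||_F *)
  ~ BM_computable (@computable_seqM R m n) (@computable_seqR R)
      (fun A => frob (pinv A)) /\
  (* (III) (A, b) |-> min_x ||A x - b||_2 *)
  ~ BM_computable (@computable_seqMV R m n) (@computable_seqR R)
      (fun Ab => lsq_res Ab.1 Ab.2) /\
  (* (IV) (A, b) |-> A^dagger b *)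
  ~ BM_computable (@computable_seqMV R m n) (@computable_seqM R n 1)
      (fun Ab => lsq_sol Ab.1 Ab.2) /\
  (* (V) (A, b) |-> ||A^dagger b||_2 *)
  ~ BM_computable (@computable_seqMV R m n) (@computable_seqR R)
      (fun Ab => norm2 (lsq_sol Ab.1 Ab.2)) /\
  (* (VI) A |-> ||A||_F ||A^dagger||_F *)
  ~ BM_computable (@computable_seqM R m n) (@computable_seqR R)
      (fun A => frob A * frob (pinv A)).
Proof.
case: m hm => [|[|m]] // _; case: n hn => [|[|n]] // _.
split; first exact: pinv_not_BM_computable.
split; first exact: frob_pinv_not_BM_computable.
split; first exact: lsq_res_not_BM_computable.
split; first exact: lsq_sol_not_BM_computable.
split; first exact: norm_lsq_sol_not_BM_computable.
exact: cond_not_BM_computable.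
Qed.
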